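(* Let $W\subseteq\mathbb{R}^d$ be open, bounded, convex, inner regular with $0\in W$, and $h>1$. Define $v_0=h\,\mathbf 1_{hW}$ on $\mathbb{Z}^d$ and $v_{k+1}=v_k+(2d)^{-1}\max\{0,\Delta v_k-\mathbf 1_{\{v_k=0\}}\}$. Then $v_k$ converges pointwise as $k\to\infty$ to $u_h$, the least function $u:\mathbb{Z}^d\to\mathbb{R}$ satisfying $u\ge h\mathbf 1_{hW}$ and $\Delta u\le\mathbf 1_{\{u=0\}}$.
   Context: Discrete Laplacian: $\Delta u(x)=\sum_{i=1}^d(u(x+e_i)+u(x-e_i)-2u(x))$. $W$ inner regular means for some $r>0$ every $x\in\partial W$ lies on $\partial B_r(y)$ with $B_r(y)\subseteq W$. *)

From mathcomp Require Import all_boot.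
From Stdlib Require Import Reals ClassicalEpsilon.
Set Implicit Arguments. Unset Strict Implicit.
Open Scope R_scope.

Definition Rvec (d : nat) := 'I_d -> R.
Definition Zvec (d : nat) := 'I_d -> Z.

Definition sumI (d : nat) (f : 'I_d -> R) : R :=
  List.fold_right (fun i acc => f i + acc) 0 (enum 'I_d).

Definition dist (d : nat) (x y : Rvec d) : R :=
  sqrt (sumI (fun i => (x i - y i) ^ 2)).

Definition ball (d : nat) (y : Rvec d) (r : R) : Rvec d -> Prop :=
  fun x => dist x y < r.

Definition subset (d : nat) (A B : Rvec d -> Prop) := forall x, A x -> B x.

Definition is_open (d : nat) (W : Rvec d -> Prop) :=
  forall x, W x -> exists r, 0 < r /\ subset (ball x r) W.

Definition is_bounded (d : nat) (W : Rvec d -> Prop) :=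
  exists M, forall x, W x -> dist x (fun _ => 0) <= M.

Definition is_convex (d : nat) (W : Rvec d -> Prop) :=
  forall x y t, W x -> W y -> 0 <= t <= 1 -> W (fun i => (1 - t) * x i + t * y i).

Definition closure (d : nat) (W : Rvec d -> Prop) : Rvec d -> Prop :=
  fun x => forall eps, 0 < eps -> exists w, W w /\ dist x w < eps.

Definition interior (d : nat) (W : Rvec d -> Prop) : Rvec d -> Prop :=
  fun x => exists r, 0 < r /\ subset (ball x r) W.

Definition boundary (d : nat) (W : Rvec d -> Prop) : Rvec d -> Prop :=
  fun x => closure W x /\ ~ interior W x.

Definition inner_regular (d : nat) (W : Rvec d -> Prop) :=
  exists r, 0 < r /\ forall x, boundary W x ->
    exists y, dist x y = r /\ subset (ball y r) W.

Definition ind (P : Prop) : R :=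
  if excluded_middle_informative P then 1 else 0.

(* z in hW  iff  z / h in W *)
Definition in_scaled (d : nat) (h : R) (W : Rvec d -> Prop) (z : Zvec d) : Prop :=
  W (fun i => IZR (z i) / h).

Definition shift (d : nat) (z : Zvec d) (i : 'I_d) (s : Z) : Zvec d :=
  fun j => if j == i then (z j + s)%Z else z j.

Definition lap (d : nat) (u : Zvec d -> R) (z : Zvec d) : R :=
  sumI (fun i => u (shift z i 1%Z) + u (shift z i (-1)%Z) - 2 * u z).

Fixpoint viter (d : nat) (h : R) (W : Rvec d -> Prop) (k : nat) : Zvec d -> R :=
  match k with
  | O => fun z => h * ind (in_scaled h W z)
  | S k' => fun z =>
      let v := viter h W k' in
      v z + / (2 * INR d) * Rmax 0 (lap v z - ind (v z = 0))
  end.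

Definition admissible (d : nat) (h : R) (W : Rvec d -> Prop) (u : Zvec d -> R) :=
  (forall z, h * ind (in_scaled h W z) <= u z) /\
  (forall z, lap u z <= ind (u z = 0)).

From Pilot Require Import Defs.
From mathcomp Require Import all_boot.
From Stdlib Require Import Reals Lra Lia ClassicalEpsilon.
Set Implicit Arguments. Unset Strict Implicit.
Open Scope R_scope.

(* The iteration only ever adds the nonnegative amount (2d)^-1 max{0, ...}, so
   (v_k z)_k is nondecreasing.  The step is order preserving: since
   Delta u z = (sum of the 2d neighbours) - 2d u z, a comparison shows that v_k
   stays below every admissible u, in particular below the admissible constant h.
   Hence v_k increases to a limit u_h, which lies below every admissible u.  The
   limit is itself admissible: the step inequality
   Delta v_k - 1_{v_k = 0} <= 2d (v_{k+1} - v_k) passes to the limit, because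
   v_k z = 0 holds for all large k exactly when u_h z = 0. *)

Lemma Un_cv_const (c : R) : Un_cv (fun _ => c) c.
Proof. by move=> e e_gt0; exists 0%nat => n _; rewrite /Rdist Rminus_diag Rabs_R0. Qed.

Lemma Un_cv_succ (u : nat -> R) (l : R) :
  Un_cv u l -> Un_cv (fun n => u (S n)) l.
Proof.
move=> cv_u e e_gt0; case: (cv_u e e_gt0) => N HN.
by exists N => n Hn; apply: HN; lia.
Qed.

Lemma Rle_cv_lim_eventually (u w : nat -> R) (lu lw : R) (N : nat) :
  (forall n, (N <= n)%coq_nat -> u n <= w n) ->
  Un_cv u lu -> Un_cv w lw -> lu <= lw.
Proof.
move=> le_uw cv_u cv_w.
apply: (Rle_cv_lim (Un := fun n => u (n + N)%coq_nat) (Vn := fun n => w (n + N)%coq_nat)).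
- by move=> n; apply: le_uw; lia.
- exact: CV_shift'.
- exact: CV_shift'.
Qed.

Section SumI.

Variable d : nat.

Lemma sumI_le (f g : 'I_d -> R) : (forall i, f i <= g i) -> sumI f <= sumI g.
Proof.
move=> le_fg; rewrite /sumI.
by elim: (enum 'I_d) => /= [|i s IH]; [lra | have := le_fg i; lra].
Qed.

Lemma sumI_sub (f g : 'I_d -> R) : sumI (fun i => f i - g i) = sumI f - sumI g.
Proof. by rewrite /sumI; elim: (enum 'I_d) => /= [|i s ->]; ring. Qed.

Lemma sumI_const (c : R) : sumI (fun _ : 'I_d => c) = INR d * c.
Proof.
rewrite /sumI -[in RHS](size_enum_ord d).
elim: (enum 'I_d) => [|i s IH]; first by rewrite /=; ring.
change (size (i :: s)) with (size s).+1.
by rewrite [List.fold_right _ _ _]/= IH S_INR; ring.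
Qed.

Lemma sumI_cv (f : nat -> 'I_d -> R) (g : 'I_d -> R) :
  (forall i, Un_cv (fun k => f k i) (g i)) -> Un_cv (fun k => sumI (f k)) (sumI g).
Proof.
move=> cv_f; rewrite /sumI.
by elim: (enum 'I_d) => /= [|i s IH]; [exact: Un_cv_const | exact: CV_plus].
Qed.

End SumI.

Lemma ind_true {P : Prop} : P -> Defs.ind P = 1.
Proof. by rewrite /Defs.ind; case: excluded_middle_informative. Qed.

Lemma ind_false {P : Prop} : ~ P -> Defs.ind P = 0.
Proof. by rewrite /Defs.ind; case: excluded_middle_informative. Qed.

Lemma ind_bounds (P : Prop) : 0 <= Defs.ind P <= 1.
Proof. rewrite /Defs.ind; destruct (excluded_middle_informative P) => /=; lra. Qed.

Lemma ind_iff (P Q : Prop) : (P <-> Q) -> Defs.ind P = Defs.ind Q.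
Proof.
move=> PQ; case: (excluded_middle_informative Q) => [q | nq].
- by rewrite !ind_true //; apply/PQ.
- by rewrite !ind_false // => /PQ.
Qed.

Lemma ind_eq0_le (a b : R) : 0 <= a -> a <= b -> Defs.ind (b = 0) <= Defs.ind (a = 0).
Proof.
move=> a_ge0 le_ab; case: (Req_dec b 0) => [b0 | nb0].
- rewrite ind_true; last lra; rewrite ind_true //; lra.
- rewrite (ind_false nb0); exact: (proj1 (ind_bounds _)).
Qed.

Section Laplacian.

Variable d : nat.

Lemma lap_const (c : R) (z : Zvec d) : lap (fun _ => c) z = 0.
Proof. by rewrite /lap (@sumI_const d (c + c - 2 * c)); ring. Qed.

Lemma lap_sub_le (v u : Zvec d -> R) (z : Zvec d) :
  (forall y, v y <= u y) -> lap v z - lap u z <= 2 * INR d * (u z - v z).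
Proof.
move=> le_vu; rewrite /lap -sumI_sub.
have -> : 2 * INR d * (u z - v z) = sumI (fun _ : 'I_d => 2 * (u z - v z)).
  by rewrite sumI_const; ring.
apply: sumI_le => i.
have := le_vu (shift z i 1%Z); have := le_vu (shift z i (-1)%Z); lra.
Qed.

Lemma lap_cv (f : nat -> Zvec d -> R) (g : Zvec d -> R) (z : Zvec d) :
  (forall y, Un_cv (fun k => f k y) (g y)) ->
  Un_cv (fun k => lap (f k) z) (lap g z).
Proof.
move=> cv_f; apply: sumI_cv => i.
apply: CV_minus; first exact: CV_plus.
by apply: CV_mult; [exact: Un_cv_const | exact: cv_f].
Qed.

End Laplacian.

Section Iteration.

Variables (d : nat) (h : R) (W : Rvec d -> Prop).
Hypotheses (d_gt0 : (0 < d)%nat) (h_ge0 : 0 <= h).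

Let v := viter h W.

Let two_d_gt0 : 0 < 2 * INR d.
Proof. have : 0 < INR d by apply: lt_0_INR; apply/ltP. lra. Qed.

Lemma viter_succ_sub (k : nat) (z : Zvec d) :
  2 * INR d * (v (S k) z - v k z) = Rmax 0 (lap (v k) z - Defs.ind (v k z = 0)).
Proof. by rewrite /v /=; field; lra. Qed.

Lemma viter_le_succ (k : nat) (z : Zvec d) : v k z <= v (S k) z.
Proof.
have := viter_succ_sub k z; have := Rmax_l 0 (lap (v k) z - Defs.ind (v k z = 0)); nra.
Qed.

Lemma lap_viter_le (k : nat) (z : Zvec d) :
  lap (v k) z - Defs.ind (v k z = 0) <= 2 * INR d * (v (S k) z - v k z).
Proof. by rewrite viter_succ_sub; apply: Rmax_r. Qed.

Lemma viter_ge0 (k : nat) (z : Zvec d) : 0 <= v k z.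
Proof.
elim: k z => [|k IH] z.
- rewrite /v /=; have := ind_bounds (in_scaled h W z); nra.
- have := viter_le_succ k z; have := IH z; lra.
Qed.

Lemma viter_le_admissible (u : Zvec d -> R) :
  admissible h W u -> forall k z, v k z <= u z.
Proof.
move=> [u_ge_init lap_u]; elim=> [|k IH] z; first exact: u_ge_init.
suff : 2 * INR d * (v (S k) z - v k z) <= 2 * INR d * (u z - v k z).
  by move/(Rmult_le_reg_l _ _ _ two_d_gt0); lra.
rewrite viter_succ_sub; apply: Rmax_lub; first by have := IH z; nra.
have := lap_sub_le z IH; have := lap_u z.
have := ind_eq0_le (viter_ge0 k z) (IH z); lra.
Qed.

Lemma admissible_const : admissible h W (fun _ => h).
Proof.
split=> z; first by have := ind_bounds (in_scaled h W z); nra.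
rewrite lap_const; exact: (proj1 (ind_bounds _)).
Qed.

Lemma viter_growing (z : Zvec d) : Un_growing (fun k => v k z).
Proof. by move=> k; apply: viter_le_succ. Qed.

Lemma viter_has_ub (z : Zvec d) : has_ub (fun k => v k z).
Proof. by exists h => _ [k ->]; apply: (viter_le_admissible admissible_const). Qed.

Definition viter_lim (z : Zvec d) : R :=
  proj1_sig (growing_cv _ (viter_growing z) (viter_has_ub z)).

Lemma viter_cv (z : Zvec d) : Un_cv (fun k => v k z) (viter_lim z).
Proof. by rewrite /viter_lim; case: growing_cv. Qed.

Lemma viter_le_lim (k : nat) (z : Zvec d) : v k z <= viter_lim z.
Proof. exact: growing_ineq _ _ (viter_growing z) (viter_cv z) k. Qed.

Lemma viter_eq0_eventually (z : Zvec d) :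
  exists N, forall n, (N <= n)%coq_nat -> (v n z = 0 <-> viter_lim z = 0).
Proof.
case: (Req_dec (viter_lim z) 0) => [lim0 | lim_neq0].
- exists 0%nat => n _; split=> // _.
  have := viter_ge0 n z; have := viter_le_lim n z; lra.
- have lim_gt0 : 0 < viter_lim z.
    by have := viter_ge0 0 z; have := viter_le_lim 0 z; lra.
  case: (viter_cv z lim_gt0) => N HN; exists N => n /HN.
  rewrite /Rdist => /Rabs_def2; lra.
Qed.

Lemma lap_viter_lim_le (z : Zvec d) : lap viter_lim z <= Defs.ind (viter_lim z = 0).
Proof.
have [N zero_iff] := viter_eq0_eventually z.
have cv_step : Un_cv (fun k => 2 * INR d * (v (S k) z - v k z) + Defs.ind (viter_lim z = 0))
                     (2 * INR d * (viter_lim z - viter_lim z) + Defs.ind (viter_lim z = 0)).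
  apply: CV_plus (Un_cv_const _); apply: CV_mult (Un_cv_const _) _.
  exact: CV_minus (Un_cv_succ (viter_cv z)) (viter_cv z).
rewrite Rminus_diag Rmult_0_r Rplus_0_l in cv_step.
apply: (Rle_cv_lim_eventually _ (lap_cv z viter_cv) cv_step) => n /zero_iff /ind_iff.
have := lap_viter_le n z; lra.
Qed.

Lemma viter_lim_admissible : admissible h W viter_lim.
Proof. by split=> z; [exact: viter_le_lim 0%nat z | exact: lap_viter_lim_le]. Qed.

Lemma viter_lim_le_admissible (u : Zvec d -> R) :
  admissible h W u -> forall z, viter_lim z <= u z.
Proof.
move=> adm_u z.
exact: Rle_cv_lim (viter_le_admissible adm_u ^~ z) (viter_cv z) (Un_cv_const _).
Qed.

End Iteration.

Theorem mainTheorem15 (d : nat) (W : Rvec d -> Prop) (h : R) :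
  (0 < d)%nat ->
  is_open W -> is_bounded W -> is_convex W -> inner_regular W ->
  W (fun _ => 0) -> 1 < h ->
  exists uh : Zvec d -> R,
    admissible h W uh /\
    (forall u, admissible h W u -> forall z, uh z <= u z) /\
    (forall z, Un_cv (fun k => viter h W k z) (uh z)).
Proof.
move=> d_gt0 _ _ _ _ _ h_gt1.
have h_ge0 : 0 <= h by lra.
exists (viter_lim W d_gt0 h_ge0); split; last split.
- exact: viter_lim_admissible.
- exact: viter_lim_le_admissible.
- exact: viter_cv.
Qed.
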